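(* Let $0<\alpha<2$. There exists $\delta=\delta(\alpha)>0$ (one may take $\delta=\min\{1/4,(3C)^{-1/(1+\alpha)}\}$ with $C=2^{\alpha+1}(1+2\alpha)$) such that the following holds. Let $\rho:\mathbb{R}\to\mathbb{R}$ be a $C^1$, $1$-periodic, even function which is nondecreasing on $[0,1/2]$. For $x\in(0,1/2]$ define $$I(x)=\int_0^x(\rho(y)-\rho(x))\left(\frac{1}{(x+y)^\alpha}+\frac{1}{(x-y)^\alpha}\right)dy,\qquad II_2(x)=\sum_{l=1}^\infty\int_{l-x}^{l+x}(\rho(y)-\rho(x))\left(\frac{1}{(x+y)^\alpha}-\frac{1}{(y-x)^\alpha}\right)dy.$$ Then $I(x)+II_2(x)\le0$ for all $x\in(0,\delta]$. *)

From Stdlib Require Import Reals Lra.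
Open Scope R_scope.

Definition is_C1 (f : R -> R) : Prop :=
  exists pr : derivable f, continuity (derive f pr).

Definition riemann_int (f : R -> R) (a b v : R) : Prop :=
  exists pr : Riemann_integrable f a b, RiemannInt pr = v.

Definition improper_int_upper (f : R -> R) (a b v : R) : Prop :=
  forall eps, 0 < eps -> exists d, 0 < d /\
    forall e, 0 < e -> e < d -> e < b - a ->
      exists w, riemann_int f a (b - e) w /\ Rabs (w - v) < eps.

Definition integrand_I (alpha : R) (rho : R -> R) (x : R) (y : R) : R :=
  (rho y - rho x) * (1 / Rpower (x + y) alpha + 1 / Rpower (x - y) alpha).

Definition integrand_II2 (alpha : R) (rho : R -> R) (x : R) (y : R) : R :=
  (rho y - rho x) * (1 / Rpower (x + y) alpha - 1 / Rpower (y - x) alpha).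

From Stdlib Require Import Reals Lra Classical.
From Coquelicot Require Import Coquelicot.
Open Scope R_scope.

(* Let m = int_0^x (rho x - rho y) dy >= 0. By evenness, periodicity and monotonicity,
   rho <= rho x on every [l - x, l + x] with l an integer. The kernel of I is positive and,
   since x + y <= 1, at least 1, so I <= -m; the improper integral exists because its
   integrand is nonpositive and, rho being Lipschitz, bounded below by a multiple of
   (x - y)^(1 - alpha), integrable as alpha < 2. The kernel of the l-th term of II_2 is
   nonnegative and, by the mean value theorem, O(x l^(-alpha-1)) with a bound that
   telescopes in l, while rho x - rho integrates to 2m over [l - x, l + x]; hence
   II_2 <= 4 x m (alpha 2^(alpha+1) + 2^alpha), which is at most m for small x. *)

Lemma Rpower_pos u c : 0 < Rpower u c.
Proof. apply exp_pos. Qed.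

Lemma inv_Rpower_pos u c : 0 < 1 / Rpower u c.
Proof. apply Rdiv_lt_0_compat; [lra | apply Rpower_pos]. Qed.

Lemma inv_Rpower_Ropp u c : 1 / Rpower u c = Rpower u (- c).
Proof. rewrite Rpower_Ropp; field; apply Rgt_not_eq, Rpower_pos. Qed.

Lemma inv_Rpower_antitone c a b : 0 <= c -> 0 < a <= b -> 1 / Rpower b c <= 1 / Rpower a c.
Proof.
  intros Hc Hab. unfold Rdiv; rewrite !Rmult_1_l.
  apply Rinv_le_contravar; [apply Rpower_pos | apply Rle_Rpower_l; auto].
Qed.

Lemma Rpower_opp_antitone c a b : 0 <= c -> 0 < a <= b -> Rpower b (- c) <= Rpower a (- c).
Proof. intros; rewrite <- !inv_Rpower_Ropp; apply inv_Rpower_antitone; auto. Qed.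

Lemma inv_Rpower_ge_1 c u : 0 <= c -> 0 < u <= 1 -> 1 <= 1 / Rpower u c.
Proof.
  intros Hc Hu. replace 1 with (1 / Rpower 1 c) at 1
    by (unfold Rpower; rewrite ln_1, Rmult_0_r, exp_0; field).
  apply inv_Rpower_antitone; auto.
Qed.

Lemma is_derive_Rpower c u : 0 < u ->
  is_derive (fun t => Rpower t c) u (c * Rpower u (c - 1)).
Proof. intros Hu; apply is_derive_Reals, derivable_pt_lim_power, Hu. Qed.

Lemma ex_derive_Rpower c u : 0 < u -> ex_derive (fun t => Rpower t c) u.
Proof. intros Hu; eexists; apply is_derive_Rpower, Hu. Qed.

Lemma inv_Rpower_MVT c a b : 0 < a < b -> exists t, a < t < b /\
  1 / Rpower a c - 1 / Rpower b c = c * (b - a) * Rpower t (- (c + 1)).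
Proof.
  intros [Ha Hab].
  destruct (MVT_cor2 (fun u => Rpower u (- c)) (fun u => - c * Rpower u (- c - 1)) a b Hab)
    as [t [Ht Ht']].
  { intros t Ht. apply derivable_pt_lim_power; lra. }
  exists t; split; auto. rewrite !inv_Rpower_Ropp.
  replace (- (c + 1)) with (- c - 1) by ring. lra.
Qed.

Lemma periodic_nat (f : R -> R) : (forall y, f (y + 1) = f y) ->
  forall k y, f (y + INR k) = f y.
Proof.
  intros Hp k; induction k as [|k IH]; intro y.
  - now rewrite Rplus_0_r.
  - rewrite S_INR, <- Rplus_assoc, Hp; apply IH.
Qed.

Lemma riemann_int_RInt f a b : ex_RInt f a b -> riemann_int f a b (RInt f a b).
Proof.
  intros H. exists (ex_RInt_Reals_0 f a b H). symmetry; apply RInt_Reals.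
Qed.

Lemma ex_RInt_derivable_on (f : R -> R) a b :
  a <= b -> (forall z, a <= z <= b -> ex_derive f z) -> ex_RInt f a b.
Proof.
  intros Hab Hd. apply (ex_RInt_continuous (V := R_CompleteNormedModule)).
  rewrite Rmin_left, Rmax_right by exact Hab.
  intros z Hz. apply (ex_derive_continuous (K := R_AbsRing) (V := R_NormedModule)), Hd, Hz.
Qed.

Lemma RInt_le_const (f : R -> R) a b c : a <= b -> ex_RInt f a b ->
  (forall y, a < y < b -> f y <= c) -> RInt f a b <= (b - a) * c.
Proof.
  intros Hab Hex Hc. apply Rle_trans with (RInt (fun _ => c) a b).
  - apply RInt_le; auto. apply ex_RInt_const.
  - rewrite RInt_const. apply Rle_refl.
Qed.

Lemma RInt_periodic_even_translate (h : R -> R) k x :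
  (forall y, continuous h y) -> (forall y, h (y + 1) = h y) -> (forall y, h (- y) = h y) ->
  RInt h (INR k - x) (INR k + x) = 2 * RInt h 0 x.
Proof.
  intros Hc Hp He.
  assert (Hex : forall a b, ex_RInt h a b)
    by (intros; apply (ex_RInt_continuous (V := R_CompleteNormedModule)); auto).
  assert (Hshift : RInt h (INR k - x) (INR k + x) = RInt h (- x) x).
  { replace (INR k - x) with (1 * - x + INR k) by ring.
    replace (INR k + x) with (1 * x + INR k) by ring.
    rewrite <- RInt_comp_lin by apply Hex.
    apply RInt_ext; intros y _.
    change (1 * h (1 * y + INR k) = h y). rewrite !Rmult_1_l. apply periodic_nat, Hp. }
  assert (Hreflect : RInt h 0 (- x) = - RInt h 0 x).
  { assert (E := RInt_comp_lin h (-1) 0 0 x (Hex _ _)).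
    replace (-1 * 0 + 0) with 0 in E by ring.
    replace (-1 * x + 0) with (- x) in E by ring.
    change (- RInt h 0 x) with (opp (RInt h 0 x)).
    rewrite <- E, <- RInt_opp by apply Hex.
    apply RInt_ext; intros y _.
    replace (-1 * y + 0) with (- y) by ring. rewrite He. change (-1 * h y = - h y). ring. }
  rewrite Hshift, <- (RInt_Chasles h (- x) 0 x), <- (opp_RInt_swap h 0 (- x)), Hreflect
    by apply Hex.
  change (- - RInt h 0 x + RInt h 0 x = 2 * RInt h 0 x). ring.
Qed.

Lemma RInt_Rpower_dist_le x e c : 0 < e < x -> 0 < c ->
  RInt (fun y => Rpower (x - y) (c - 1)) 0 (x - e) <= Rpower x c / c.
Proof.
  intros He Hc.
  assert (Hprim : is_RInt (fun y => Rpower (x - y) (c - 1)) 0 (x - e)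
     (minus (- Rpower (x - (x - e)) c / c) (- Rpower (x - 0) c / c))).
  { apply (is_RInt_derive (fun y => - Rpower (x - y) c / c)); intros y Hy;
      rewrite Rmin_left, Rmax_right in Hy by lra.
    - assert (D := is_derive_Rpower c (x - y) ltac:(lra)).
      auto_derive; [eexists; exact D |].
      replace (x + - y) with (x - y) by ring.
      replace (Derive (fun u => Rpower u c) (x - y)) with (c * Rpower (x - y) (c - 1))
        by (symmetry; apply is_derive_unique, D).
      field. lra.
    - apply (ex_derive_continuous (K := R_AbsRing) (V := R_NormedModule)
               (fun y => Rpower (x - y) (c - 1))).
      auto_derive. apply ex_derive_Rpower; lra. }
  rewrite (is_RInt_unique _ _ _ _ Hprim).
  change (minus ?a ?b) with (a - b).
  replace (x - 0) with x by ring.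
  assert (0 < Rpower (x - (x - e)) c / c) by (apply Rdiv_lt_0_compat; [apply Rpower_pos | lra]).
  lra.
Qed.

Lemma nondecreasing_right_limit (F : R -> R) b m : 0 < b ->
  (forall e1 e2, 0 < e1 <= e2 -> e2 < b -> F e1 <= F e2) ->
  (forall e, 0 < e < b -> m <= F e) ->
  exists v, (forall e, 0 < e < b -> v <= F e) /\
    forall eps, 0 < eps -> exists d, 0 < d /\
      forall e, 0 < e -> e < d -> e < b -> Rabs (F e - v) < eps.
Proof.
  intros Hb Hmono Hm.
  set (E := fun r => exists e, 0 < e < b /\ r = - F e).
  destruct (completeness E) as [s [Hub Hlub]].
  { exists (- m). intros r [e [He ->]]. specialize (Hm e He). lra. }
  { exists (- F (b / 2)), (b / 2). split; [lra | reflexivity]. }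
  assert (Hinf : forall e, 0 < e < b -> - s <= F e).
  { intros e He. assert (- F e <= s) by (apply Hub; exists e; auto). lra. }
  exists (- s); split; [exact Hinf |].
  intros eps Heps.
  destruct (classic (exists e0, 0 < e0 < b /\ F e0 < - s + eps)) as [[e0 [He0 Hlt]] | Hnone].
  - exists e0; split; [lra |]. intros e He Hed Heb.
    assert (F e <= F e0) by (apply Hmono; lra).
    specialize (Hinf e (conj He Heb)). apply Rabs_def1; lra.
  - assert (s <= s - eps); [| lra].
    apply Hlub. intros r [e [He ->]].
    destruct (Rlt_le_dec (F e) (- s + eps)) as [Hlt | Hge]; [| lra].
    exfalso; apply Hnone; exists e; auto.
Qed.

Lemma nonneg_series_bounded (a : nat -> R) B :
  (forall n, 0 <= a n) -> (forall N, sum_f_R0 a N <= B) ->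
  exists v, infinite_sum a v /\ v <= B.
Proof.
  intros Hpos Hbound.
  destruct (growing_cv (sum_f_R0 a)) as [v Hv].
  { intro n; simpl; specialize (Hpos (S n)); lra. }
  { exists B; intros r [N ->]; apply Hbound. }
  exists v; split; [exact Hv |].
  apply (Rle_cv_lim Hbound Hv).
  intros eps Heps; exists 0%nat; intros n _.
  unfold Rdist; rewrite Rminus_diag, Rabs_R0; exact Heps.
Qed.

Lemma C1_lipschitz_on (f : R -> R) a b : is_C1 f -> a <= b ->
  exists L, forall y z, a <= y <= z -> z <= b -> f z - f y <= L * (z - y).
Proof.
  intros [pr Hcont] Hab.
  destruct (continuity_ab_maj (fun t => Rabs (derive f pr t)) a b Hab) as [t0 [Hmax _]].
  { intros t _.
    apply (continuity_pt_comp (derive f pr) Rabs); [apply Hcont | apply Rcontinuity_abs]. }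
  exists (Rabs (derive f pr t0)). intros y z Hy Hz.
  destruct (Req_dec y z) as [<- | Hne]; [lra |].
  destruct (MVT_cor1 f y z pr ltac:(lra)) as [t [Ht Hyt]].
  rewrite Ht. apply Rmult_le_compat_r; [lra |].
  apply Rle_trans with (1 := Rle_abs _), Hmax; lra.
Qed.

Lemma II2_kernel_MVT al x y : 0 < x < y -> exists c, y - x < c /\
  1 / Rpower (y - x) al - 1 / Rpower (x + y) al = al * (2 * x) * Rpower c (- (al + 1)).
Proof.
  intros Hxy. destruct (inv_Rpower_MVT al (y - x) (x + y)) as [c [Hc E]]; [lra |].
  exists c; split; [lra |]. rewrite E. now replace (x + y - (y - x)) with (2 * x) by ring.
Qed.

Lemma II2_kernel_le_first al x y : 0 < al -> 0 < x <= 1 / 4 -> 1 - x <= y <= 1 + x ->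
  1 / Rpower (y - x) al - 1 / Rpower (x + y) al <= 2 * x * (al * Rpower (1 / 2) (- (al + 1))).
Proof.
  intros Hal Hx Hy. destruct (II2_kernel_MVT al x y) as [c [Hc ->]]; [lra |].
  assert (Hdecay := Rpower_opp_antitone (al + 1) (1 / 2) c ltac:(lra) ltac:(lra)).
  assert (0 <= 2 * x * al) by nra. nra.
Qed.

Lemma II2_kernel_le_telescoping al x l y : 0 < al -> 0 < x <= 1 / 4 -> 2 <= l ->
  l - x <= y <= l + x ->
  1 / Rpower (y - x) al - 1 / Rpower (x + y) al <=
  2 * x * (1 / Rpower (l - 3 / 2) al - 1 / Rpower (l - 1 / 2) al).
Proof.
  intros Hal Hx Hl Hy.
  destruct (II2_kernel_MVT al x y) as [c [Hc ->]]; [lra |].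
  destruct (inv_Rpower_MVT al (l - 3 / 2) (l - 1 / 2)) as [c' [Hc' ->]]; [lra |].
  assert (Hdecay := Rpower_opp_antitone (al + 1) c' c ltac:(lra) ltac:(lra)).
  replace (l - 1 / 2 - (l - 3 / 2)) with 1 by lra.
  assert (0 <= 2 * x * al) by nra. nra.
Qed.

(* The kernel of the [l = 1] term of [II_2] is at most [2 x alpha 2^(alpha+1)], and the
   telescoping bounds of the terms [l >= 2] sum to at most [2 x 2^alpha]. *)
Definition II2_constant al := al * Rpower (1 / 2) (- (al + 1)) + 1 / Rpower (1 / 2) al.

Lemma II2_constant_pos al : 0 < al -> 0 < II2_constant al.
Proof.
  intros Hal. unfold II2_constant.
  assert (H1 := Rpower_pos (1 / 2) (- (al + 1))). assert (H2 := inv_Rpower_pos (1 / 2) al).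
  nra.
Qed.

Section Estimates.

Variables (al : R) (rho : R -> R) (x : R).
Hypotheses (al_pos : 0 < al) (rho_derivable : forall t, ex_derive rho t)
  (rho_periodic : forall y, rho (y + 1) = rho y) (rho_even : forall y, rho (- y) = rho y)
  (rho_mono : forall a b, 0 <= a -> a <= b -> b <= 1 / 2 -> rho a <= rho b)
  (x_pos : 0 < x) (x_le : x <= 1 / 4).

Local Notation deficit := (fun y => rho x - rho y).
Local Notation mass := (RInt deficit 0 x).

Lemma rho_le_near_integers k y : INR k - x <= y <= INR k + x -> rho y <= rho x.
Proof.
  intros Hy. replace y with (y - INR k + INR k) by ring.
  rewrite (periodic_nat rho rho_periodic).
  destruct (Rle_lt_dec 0 (y - INR k)).
  - apply rho_mono; lra.
  - rewrite <- rho_even. apply rho_mono; lra.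
Qed.

Lemma continuous_deficit y : continuous deficit y.
Proof.
  apply (ex_derive_continuous (K := R_AbsRing) (V := R_NormedModule)).
  auto_derive. apply rho_derivable.
Qed.

Lemma ex_RInt_deficit a b : ex_RInt deficit a b.
Proof.
  apply (ex_RInt_continuous (V := R_CompleteNormedModule)). intros; apply continuous_deficit.
Qed.

Lemma mass_nonneg : 0 <= mass.
Proof.
  apply RInt_ge_0; [lra | apply ex_RInt_deficit |].
  intros y Hy. assert (rho y <= rho x) by (apply (rho_le_near_integers 0); simpl; lra). lra.
Qed.

Lemma mass_translate k : RInt deficit (INR k - x) (INR k + x) = 2 * mass.
Proof.
  apply RInt_periodic_even_translate.
  - apply continuous_deficit.
  - intro y; now rewrite rho_periodic.
  - intro y; now rewrite rho_even.
Qed.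

Lemma ex_RInt_integrand_I a b : 0 <= a <= b -> b < x -> ex_RInt (integrand_I al rho x) a b.
Proof.
  intros Hab Hb. apply ex_RInt_derivable_on; [lra |]. intros z Hz.
  unfold integrand_I. auto_derive.
  assert (0 < Rpower (x + z) al) by apply Rpower_pos.
  assert (0 < Rpower (x + - z) al) by apply Rpower_pos.
  repeat split; try apply rho_derivable; try apply ex_derive_Rpower; lra.
Qed.

Lemma integrand_I_nonpos y : 0 <= y < x -> integrand_I al rho x y <= 0.
Proof.
  intros Hy. unfold integrand_I.
  assert (rho y <= rho x) by (apply (rho_le_near_integers 0); simpl; lra).
  assert (H1 := inv_Rpower_pos (x + y) al). assert (H2 := inv_Rpower_pos (x - y) al).
  apply Rmult_le_0_r; lra.
Qed.

Lemma integrand_I_le_neg_deficit y : 0 <= y < x -> integrand_I al rho x y <= rho y - rho x.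
Proof.
  intros Hy. unfold integrand_I.
  assert (rho y <= rho x) by (apply (rho_le_near_integers 0); simpl; lra).
  assert (H1 := inv_Rpower_ge_1 al (x + y) ltac:(lra) ltac:(lra)).
  assert (H2 := inv_Rpower_pos (x - y) al).
  nra.
Qed.

Lemma integrand_I_ge L y : rho x - rho y <= L * (x - y) -> 0 <= y < x ->
  - (2 * L) * Rpower (x - y) (1 - al) <= integrand_I al rho x y.
Proof.
  intros HL Hy. unfold integrand_I.
  assert (rho y <= rho x) by (apply (rho_le_near_integers 0); simpl; lra).
  replace (Rpower (x - y) (1 - al)) with ((x - y) * (1 / Rpower (x - y) al))
    by (rewrite inv_Rpower_Ropp, <- (Rpower_1 (x - y)) at 1 by lra;
        rewrite <- Rpower_plus; f_equal; ring).
  assert (Hpq := inv_Rpower_antitone al (x - y) (x + y) ltac:(lra) ltac:(lra)).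
  assert (Hp := inv_Rpower_pos (x + y) al).
  assert ((rho x - rho y) * (1 / Rpower (x + y) al + 1 / Rpower (x - y) al)
          <= L * (x - y) * (2 * (1 / Rpower (x - y) al)))
    by (apply Rmult_le_compat; lra).
  lra.
Qed.

Local Notation I_trunc e := (RInt (integrand_I al rho x) 0 (x - e)).

Lemma I_trunc_nondecreasing e1 e2 : 0 < e1 <= e2 -> e2 < x -> I_trunc e1 <= I_trunc e2.
Proof.
  intros He1 He2.
  rewrite <- (RInt_Chasles (integrand_I al rho x) 0 (x - e2) (x - e1))
    by (apply ex_RInt_integrand_I; lra).
  assert (RInt (integrand_I al rho x) (x - e2) (x - e1) <= (x - e1 - (x - e2)) * 0)
    by (apply RInt_le_const; [lra | apply ex_RInt_integrand_I; lra |];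
        intros y Hy; apply integrand_I_nonpos; lra).
  change (plus ?a ?b) with (a + b). lra.
Qed.

Lemma I_trunc_lower_bound L e : al < 2 ->
  (forall y, 0 <= y <= x -> rho x - rho y <= L * (x - y)) -> 0 < e < x ->
  - (2 * L) * (Rpower x (2 - al) / (2 - al)) <= I_trunc e.
Proof.
  intros al_lt_2 HL He.
  assert (HL0 : 0 <= L).
  { assert (rho 0 <= rho x) by (apply rho_mono; lra).
    assert (HL0 := HL 0 ltac:(lra)). nra. }
  assert (Hint := RInt_Rpower_dist_le x e (2 - al) He ltac:(lra)).
  replace (2 - al - 1) with (1 - al) in Hint by ring.
  assert (Hex : ex_RInt (fun y => Rpower (x - y) (1 - al)) 0 (x - e)).
  { apply ex_RInt_derivable_on; [lra |]. intros z Hz.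
    auto_derive. apply ex_derive_Rpower; lra. }
  apply Rle_trans with (RInt (fun y => scal (- (2 * L)) (Rpower (x - y) (1 - al))) 0 (x - e)).
  - rewrite (RInt_scal (V := R_CompleteNormedModule)) by exact Hex.
    apply Rmult_le_compat_neg_l; [lra | exact Hint].
  - apply RInt_le; [lra | apply (ex_RInt_scal (V := R_NormedModule)), Hex
                   | apply ex_RInt_integrand_I; lra |].
    intros y Hy. apply integrand_I_ge; [apply HL |]; lra.
Qed.

Lemma I_trunc_le_neg_mass e : 0 < e < x -> I_trunc e <= - mass + e * (rho x - rho 0).
Proof.
  intros He.
  assert (Hhead : I_trunc e + RInt deficit 0 (x - e) <= (x - e - 0) * 0).
  { rewrite <- (RInt_plus (V := R_CompleteNormedModule))
      by (apply ex_RInt_deficit || (apply ex_RInt_integrand_I; lra)).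
    apply RInt_le_const;
      [lra | apply ex_RInt_plus; [apply ex_RInt_integrand_I; lra | apply ex_RInt_deficit] |].
    intros y Hy. assert (H := integrand_I_le_neg_deficit y ltac:(lra)).
    change (plus ?a ?b) with (a + b). lra. }
  assert (Htail : RInt deficit (x - e) x <= (x - (x - e)) * (rho x - rho 0)).
  { apply RInt_le_const; [lra | apply ex_RInt_deficit |]. intros y Hy.
    assert (rho 0 <= rho y) by (apply rho_mono; lra). lra. }
  rewrite <- (RInt_Chasles _ 0 (x - e) x) by apply ex_RInt_deficit.
  change (plus ?a ?b) with (a + b). lra.
Qed.

Lemma improper_I_le_neg_mass L : al < 2 ->
  (forall y, 0 <= y <= x -> rho x - rho y <= L * (x - y)) ->
  exists vI, improper_int_upper (integrand_I al rho x) 0 x vI /\ vI <= - mass.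
Proof.
  intros al_lt_2 HL.
  destruct (nondecreasing_right_limit (fun e => I_trunc e) x _ x_pos I_trunc_nondecreasing
              (fun e => I_trunc_lower_bound L e al_lt_2 HL)) as [v [Hinf Hlim]].
  exists v; split.
  - intros eps Heps. destruct (Hlim eps Heps) as [d [Hd Hclose]].
    exists d; split; [exact Hd |]. intros e He Hed Hex.
    exists (I_trunc e); split;
      [apply riemann_int_RInt, ex_RInt_integrand_I; lra | apply Hclose; lra].
  - set (B := rho x - rho 0).
    assert (HB : 0 <= B) by (assert (rho 0 <= rho x) by (apply rho_mono; lra); unfold B; lra).
    apply Rle_plus_epsilon. intros eps Heps.
    set (e := Rmin (x / 2) (eps / (B + 1))).
    assert (He : 0 < e) by (apply Rmin_glb_lt; [lra | apply Rdiv_lt_0_compat; lra]).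
    assert (He2 : e <= x / 2) by apply Rmin_l.
    assert (HeB : e * B <= eps).
    { apply Rle_trans with (eps / (B + 1) * (B + 1)).
      - apply Rmult_le_compat; [lra | lra | apply Rmin_r | lra].
      - right; field; lra. }
    assert (H1 : v <= I_trunc e) by (apply Hinf; lra).
    assert (H2 := I_trunc_le_neg_mass e ltac:(lra)). fold B in H2. lra.
Qed.

Lemma ex_RInt_integrand_II2 a b : x < a <= b -> ex_RInt (integrand_II2 al rho x) a b.
Proof.
  intros Hab. apply ex_RInt_derivable_on; [lra |]. intros z Hz.
  unfold integrand_II2. auto_derive.
  assert (0 < Rpower (x + z) al) by apply Rpower_pos.
  assert (0 < Rpower (z + - x) al) by apply Rpower_pos.
  repeat split; try apply rho_derivable; try apply ex_derive_Rpower; lra.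
Qed.

Lemma integrand_II2_deficit y : integrand_II2 al rho x y =
  (rho x - rho y) * (1 / Rpower (y - x) al - 1 / Rpower (x + y) al).
Proof. unfold integrand_II2; ring. Qed.

Lemma RInt_II2_nonneg n : 0 <= RInt (integrand_II2 al rho x) (INR (S n) - x) (INR (S n) + x).
Proof.
  assert (Hn := pos_INR n). rewrite S_INR.
  apply RInt_ge_0; [lra | apply ex_RInt_integrand_II2; lra |].
  intros y Hy. rewrite integrand_II2_deficit. apply Rmult_le_pos.
  - assert (rho y <= rho x) by (apply (rho_le_near_integers (S n)); rewrite S_INR; lra). lra.
  - assert (H := inv_Rpower_antitone al (y - x) (x + y) ltac:(lra) ltac:(lra)). lra.
Qed.

Lemma RInt_II2_le n E :
  (forall y, INR (S n) - x <= y <= INR (S n) + x ->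
     1 / Rpower (y - x) al - 1 / Rpower (x + y) al <= 2 * x * E) ->
  RInt (integrand_II2 al rho x) (INR (S n) - x) (INR (S n) + x) <= 4 * x * E * mass.
Proof.
  intros HE. assert (Hn := pos_INR n). assert (Hl : 1 <= INR (S n)) by (rewrite S_INR; lra).
  apply Rle_trans with
    (RInt (fun y => scal (2 * x * E) (rho x - rho y)) (INR (S n) - x) (INR (S n) + x)).
  - apply RInt_le; [lra | apply ex_RInt_integrand_II2; lra
                   | apply (ex_RInt_scal (V := R_NormedModule)), ex_RInt_deficit |].
    intros y Hy. rewrite integrand_II2_deficit.
    change (scal (2 * x * E) (rho x - rho y)) with (2 * x * E * (rho x - rho y)).
    assert (rho y <= rho x) by (apply (rho_le_near_integers (S n)); lra).
    rewrite Rmult_comm. apply Rmult_le_compat_r; [lra | apply HE; lra].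
  - rewrite (RInt_scal (V := R_CompleteNormedModule)) by apply ex_RInt_deficit.
    rewrite mass_translate. apply Req_le.
    change (2 * x * E * (2 * mass) = 4 * x * E * mass). ring.
Qed.

Lemma sum_RInt_II2_le N :
  sum_f_R0 (fun n => RInt (integrand_II2 al rho x) (INR (S n) - x) (INR (S n) + x)) N <=
  4 * x * mass * (II2_constant al - 1 / Rpower (INR N + 1 / 2) al).
Proof.
  unfold II2_constant. induction N as [| N IH].
  - replace (INR 0 + 1 / 2) with (1 / 2) by (simpl; lra).
    replace (4 * x * mass * (al * Rpower (1 / 2) (- (al + 1)) + 1 / Rpower (1 / 2) al
                             - 1 / Rpower (1 / 2) al))
      with (4 * x * (al * Rpower (1 / 2) (- (al + 1))) * mass) by ring.
    apply (RInt_II2_le 0). intros y Hy.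
    apply II2_kernel_le_first; [exact al_pos | lra | simpl in Hy; lra].
  - assert (Hstep : RInt (integrand_II2 al rho x) (INR (S (S N)) - x) (INR (S (S N)) + x) <=
      4 * x * (1 / Rpower (INR N + 1 / 2) al - 1 / Rpower (INR (S N) + 1 / 2) al) * mass).
    { apply RInt_II2_le. intros y Hy.
      replace (INR N + 1 / 2) with (INR (S (S N)) - 3 / 2) by (rewrite !S_INR; lra).
      replace (INR (S N) + 1 / 2) with (INR (S (S N)) - 1 / 2) by (rewrite !S_INR; lra).
      apply II2_kernel_le_telescoping; [exact al_pos | lra | | exact Hy].
      assert (Hn := pos_INR N). rewrite !S_INR; lra. }
    rewrite tech5. lra.
Qed.

Lemma II2_series_le_mass : 4 * x * II2_constant al <= 1 ->
  exists vII (a : nat -> R),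
    (forall n, riemann_int (integrand_II2 al rho x) (INR (S n) - x) (INR (S n) + x) (a n)) /\
    infinite_sum a vII /\ vII <= mass.
Proof.
  intros Hsmall.
  destruct (nonneg_series_bounded
              (fun n => RInt (integrand_II2 al rho x) (INR (S n) - x) (INR (S n) + x)) mass)
    as [vII [Hsum Hle]].
  - apply RInt_II2_nonneg.
  - intro N. apply Rle_trans with (1 := sum_RInt_II2_le N).
    assert (HP := inv_Rpower_pos (INR N + 1 / 2) al). assert (Hm := mass_nonneg).
    assert (0 <= x * mass * (1 / Rpower (INR N + 1 / 2) al))
      by (apply Rmult_le_pos; [apply Rmult_le_pos |]; lra).
    nra.
  - exists vII, (fun n => RInt (integrand_II2 al rho x) (INR (S n) - x) (INR (S n) + x)).
    split; [| split; assumption].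
    intro n. assert (Hn := pos_INR n).
    apply riemann_int_RInt, ex_RInt_integrand_II2. rewrite S_INR; lra.
Qed.

End Estimates.

Theorem lemma2p5 (alpha : R) (halpha : 0 < alpha < 2) :
  exists delta : R, 0 < delta /\
  forall rho : R -> R,
    is_C1 rho ->
    (forall y, rho (y + 1) = rho y) ->
    (forall y, rho (- y) = rho y) ->
    (forall a b, 0 <= a -> a <= b -> b <= 1 / 2 -> rho a <= rho b) ->
    forall x, 0 < x -> x <= delta ->
      exists (vI vII : R) (a : nat -> R),
        improper_int_upper (integrand_I alpha rho x) 0 x vI /\
        (forall n : nat,
            riemann_int (integrand_II2 alpha rho x)
              (INR (S n) - x) (INR (S n) + x) (a n)) /\
        infinite_sum a vII /\
        vI + vII <= 0.
Proof.
  assert (Hc := II2_constant_pos alpha ltac:(lra)).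
  exists (Rmin (1 / 4) (1 / (4 * II2_constant alpha + 1))). split.
  { apply Rmin_glb_lt; [lra | apply Rdiv_lt_0_compat; lra]. }
  intros rho HC1 Hper Heven Hmono x Hx Hxd.
  assert (Hx4 : x <= 1 / 4) by (apply Rle_trans with (1 := Hxd), Rmin_l).
  assert (Hsmall : 4 * x * II2_constant alpha <= 1).
  { set (c := II2_constant alpha) in *.
    assert (Hxc : x <= 1 / (4 * c + 1)) by (apply Rle_trans with (1 := Hxd), Rmin_r).
    apply Rle_trans with (4 * c * (1 / (4 * c + 1))).
    - replace (4 * x * c) with (4 * c * x) by ring. apply Rmult_le_compat_l; lra.
    - replace (4 * c * (1 / (4 * c + 1))) with (1 - 1 / (4 * c + 1)) by (field; lra).
      assert (0 < 1 / (4 * c + 1)) by (apply Rdiv_lt_0_compat; lra). lra. }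
  assert (Hder : forall t, ex_derive rho t)
    by (destruct HC1 as [pr _]; intro t; apply ex_derive_Reals_1, pr).
  destruct (C1_lipschitz_on rho 0 (1 / 2) HC1 ltac:(lra)) as [L HL].
  destruct (improper_I_le_neg_mass alpha rho x ltac:(lra) Hder Hper Heven Hmono Hx Hx4 L ltac:(lra))
    as [vI [HI HvI]].
  { intros y Hy. apply HL; lra. }
  destruct (II2_series_le_mass alpha rho x ltac:(lra) Hder Hper Heven Hmono Hx Hx4 Hsmall)
    as [vII [a [Ha [Hs HvII]]]].
  exists vI, vII, a. repeat split; auto. lra.
Qed.
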